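(* Let $\mathcal{Q}$ be a small involutive quantaloid. For every $\mathcal{Q}$-category $\mathbb{A}$, the assignment $L_{\mathbb{A}}\colon(\mathbb{A}_{\mathsf s})_{\mathsf{sc}}\to(\mathbb{A}_{\mathsf{cc}})_{\mathsf s}$, $\phi\mapsto\mathbb{A}(-,S_{\mathbb{A}}-)\otimes\phi$, is a full embedding of $\mathcal{Q}$-categories (fully faithful and injective on objects), and these functors form a natural transformation $L\colon(-)_{\mathsf{sc}}\circ(-)_{\mathsf s}\Rightarrow(-)_{\mathsf s}\circ(-)_{\mathsf{cc}}$ of functors $\mathsf{Cat}(\mathcal{Q})\to\mathsf{SymCat}(\mathcal{Q})$. Moreover, for every $\mathcal{Q}$-category $\mathbb{A}$, $(\mathbb{A}_{\mathsf{cc}})_{\mathsf s}$ is symmetrically complete.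
   Context: A quantaloid is a category enriched in $\mathsf{Sup}$; an involution is an identity-on-objects, direction-reversing, monotone map $f\mapsto f^{\mathsf o}$ on morphisms with $(g\circ f)^{\mathsf o}=f^{\mathsf o}\circ g^{\mathsf o}$, $f^{\mathsf{oo}}=f$. A $\mathcal{Q}$-category $\mathbb{A}$: objects with types $tx$, homs $\mathbb{A}(y,x)\colon tx\to ty$ with $\mathbb{A}(z,y)\circ\mathbb{A}(y,x)\le\mathbb{A}(z,x)$, $1_{tx}\le\mathbb{A}(x,x)$; symmetric if $\mathbb{A}(x,y)=\mathbb{A}(y,x)^{\mathsf o}$. Functors: type-preserving $F$ with $\mathbb{A}(y,x)\le\mathbb{B}(Fy,Fx)$; categories $\mathsf{Cat}(\mathcal{Q})$ and (full) $\mathsf{SymCat}(\mathcal{Q})$. Symmetrisation: $\mathbb{A}_{\mathsf s}$ has the same objects and $\mathbb{A}_{\mathsf s}(y,x)=\mathbb{A}(y,x)\wedge\mathbb{A}(x,y)^{\mathsf o}$; $F_{\mathsf s}x=Fx$; $S_{\mathbb{A}}\colon\mathbb{A}_{\mathsf s}\to\mathbb{A}$ is the identity on objects. Distributors $\Phi\colon\mathbb{A}\to\mathbb{B}$: arrows $\Phi(y,x)\colon tx\to ty$ with $\mathbb{B}(y',y)\circ\Phi(y,x)\le\Phi(y',x)$, $\Phi(y,x)\circ\mathbb{A}(x,x')\le\Phi(y,x')$; composition $(\Psi\otimes\Phi)(z,x)=\bigvee_y\Psi(z,y)\circ\Phi(y,x)$; left adjoint with right adjoint $\Phi^*$ if $\mathbb{A}\le\Phi^*\otimes\Phi$,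 $\Phi\otimes\Phi^*\le\mathbb{B}$. A functor $F$ gives the distributor $\mathbb{B}(-,F-)$ (elements $\mathbb{B}(y,Fx)$); e.g. $\mathbb{A}(-,S_{\mathbb{A}}-)\colon\mathbb{A}_{\mathsf s}\to\mathbb{A}$ has elements $\mathbb{A}(y,x)$. For symmetric domain and codomain, $\Phi^{\mathsf o}(x,y)=\Phi(y,x)^{\mathsf o}$, and $\Phi$ is a symmetric left adjoint if left adjoint to $\Phi^{\mathsf o}$. $*_X$: one object of type $X$, hom $1_X$; presheaf: distributor $*_X\to\mathbb{A}$, representable if equal to $\mathbb{A}(-,a)$. Cauchy completion $\mathbb{A}_{\mathsf{cc}}$: objects the left adjoint presheaves $\phi\colon*_X\to\mathbb{A}$ (type $X$), hom the unique element of $\psi^*\otimes\phi$; $F_{\mathsf{cc}}(\phi)=\mathbb{B}(-,F-)\otimes\phi$. For symmetric $\mathbb{A}$, $\mathbb{A}_{\mathsf{sc}}$ is the full subcategory of $\mathbb{A}_{\mathsf{cc}}$ on symmetric left adjoint presheaves, and $F_{\mathsf{sc}}(\phi)=\mathbb{B}(-,F-)\otimes\phi$. A symmetric $\mathcal{Q}$-category is symmetrically complete if each of its symmetric left adjoint presheaves is representable. Naturality of $L$ means $(F_{\mathsf{cc}})_{\mathsf s}\circ L_{\mathbb{A}}=L_{\mathbb{B}}\circ(F_{\mathsf s})_{\mathsf{sc}}$ for every functor $F\colon\mathbb{A}\to\mathbb{B}$. *)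

From Stdlib Require Import ClassicalEpsilon.

Unset Strict Implicit.

(* A (small) quantaloid: objects [qob], for each X Y a complete (sup-)lattice
   [qhom X Y] of arrows X -> Y (order [qle], arbitrary joins [qsup]),
   composition [qcomp g f] (= g o f) preserving arbitrary joins in each
   variable, identities. *)
Record Quantaloid : Type := {
  qob : Type;
  qhom : qob -> qob -> Type;
  qle : forall X Y, qhom X Y -> qhom X Y -> Prop;
  qsup : forall X Y, (qhom X Y -> Prop) -> qhom X Y;
  qcomp : forall X Y Z, qhom Y Z -> qhom X Y -> qhom X Z;
  qid : forall X, qhom X X;
  qle_refl : forall X Y (f : qhom X Y), qle X Y f f;
  qle_trans : forall X Y (f g h : qhom X Y),
      qle X Y f g -> qle X Y g h -> qle X Y f h;
  qle_antisym : forall X Y (f g : qhom X Y),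
      qle X Y f g -> qle X Y g f -> f = g;
  qsup_ub : forall X Y (S : qhom X Y -> Prop) f, S f -> qle X Y f (qsup X Y S);
  qsup_least : forall X Y (S : qhom X Y -> Prop) g,
      (forall f, S f -> qle X Y f g) -> qle X Y (qsup X Y S) g;
  qcompA : forall X Y Z W (f : qhom X Y) (g : qhom Y Z) (h : qhom Z W),
      qcomp X Z W h (qcomp X Y Z g f) = qcomp X Y W (qcomp Y Z W h g) f;
  qcomp1l : forall X Y (f : qhom X Y), qcomp X Y Y (qid Y) f = f;
  qcomp1r : forall X Y (f : qhom X Y), qcomp X X Y f (qid X) = f;
  qcomp_supl : forall X Y Z (g : qhom Y Z) (S : qhom X Y -> Prop),
      qcomp X Y Z g (qsup X Y S)
      = qsup X Z (fun h => exists f, S f /\ h = qcomp X Y Z g f);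
  qcomp_supr : forall X Y Z (S : qhom Y Z -> Prop) (f : qhom X Y),
      qcomp X Y Z (qsup Y Z S) f
      = qsup X Z (fun h => exists g, S g /\ h = qcomp X Y Z g f)
}.

Arguments qle {q X Y}.
Arguments qsup {q X Y}.
Arguments qcomp {q X Y Z}.
Arguments qid {q}.

Record IQuantaloid : Type := {
  iq :> Quantaloid;
  qinv : forall X Y, qhom iq X Y -> qhom iq Y X;
  qinv_mono : forall X Y (f g : qhom iq X Y),
      qle f g -> qle (qinv X Y f) (qinv X Y g);
  qinv_comp : forall X Y Z (f : qhom iq X Y) (g : qhom iq Y Z),
      qinv X Z (qcomp g f) = qcomp (qinv X Y f) (qinv Y Z g);
  qinv_inv : forall X Y (f : qhom iq X Y), qinv Y X (qinv X Y f) = f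
}.

Arguments qinv {i X Y}.

Set Implicit Arguments.

Section QCategories.
Variable Q : IQuantaloid.

Definition qmeet {X Y} (f g : qhom Q X Y) : qhom Q X Y :=
  qsup (fun h => qle h f /\ qle h g).

Definition qbot {X Y} : qhom Q X Y := qsup (fun _ => False).

(* A Q-category is presented as a Q_0-indexed family of object sets:
   [cob A X] is the set of objects x with type t x = X.
   [chom A y x] = A(y,x) : t x -> t y. *)
Record QCat : Type := {
  cob : qob Q -> Type;
  chom : forall X Y, cob Y -> cob X -> qhom Q X Y
}.
Arguments chom _ {X Y}.

Definition is_qcat (A : QCat) : Prop :=
  (forall X Y Z (z : cob A Z) (y : cob A Y) (x : cob A X),
      qle (qcomp (chom A z y) (chom A y x)) (chom A z x)) /\
  (forall X (x : cob A X), qle (qid X) (chom A x x)).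

Definition is_symmetric (A : QCat) : Prop :=
  forall X Y (y : cob A Y) (x : cob A X), chom A x y = qinv (chom A y x).

Definition is_functor (A B : QCat) (F : forall X, cob A X -> cob B X) : Prop :=
  forall X Y (y : cob A Y) (x : cob A X),
    qle (chom A y x) (chom B (F Y y) (F X x)).

Definition fully_faithful (A B : QCat) (F : forall X, cob A X -> cob B X) : Prop :=
  forall X Y (y : cob A Y) (x : cob A X),
    chom B (F Y y) (F X x) = chom A y x.

Definition injective_on_objects (A B : QCat) (F : forall X, cob A X -> cob B X)
  : Prop := forall X (x x' : cob A X), F X x = F X x' -> x = x'.

Definition dist (A B : QCat) : Type :=
  forall X Y, cob B Y -> cob A X -> qhom Q X Y.

Definition is_dist (A B : QCat) (P : dist A B) : Prop :=
  (forall X Y Y' (y' : cob B Y') (y : cob B Y) (x : cob A X),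
      qle (qcomp (chom B y' y) (P X Y y x)) (P X Y' y' x)) /\
  (forall X X' Y (y : cob B Y) (x : cob A X) (x' : cob A X'),
      qle (qcomp (P X Y y x) (chom A x x')) (P X' Y y x')).

Definition dcomp (A B C : QCat) (P2 : dist B C) (P1 : dist A B) : dist A C :=
  fun X Z z x =>
    qsup (fun h => exists Y (y : cob B Y), h = qcomp (P2 Y Z z y) (P1 X Y y x)).

Definition dle (A B : QCat) (P P' : dist A B) : Prop :=
  forall X Y (y : cob B Y) (x : cob A X), qle (P X Y y x) (P' X Y y x).

Definition did (A : QCat) : dist A A := fun X Y y x => chom A y x.
Arguments did : clear implicits.

Definition is_ladj (A B : QCat) (P : dist A B) (P' : dist B A) : Prop :=
  is_dist P /\ is_dist P' /\ dle (did A) (dcomp P' P) /\ dle (dcomp P P') (did B).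

Definition dconv (A B : QCat) (P : dist A B) : dist B A :=
  fun X Y (a : cob A Y) (b : cob B X) => qinv (P Y X b a).

Definition fdist (A B : QCat) (F : forall X, cob A X -> cob B X) : dist A B :=
  fun X Y (y : cob B Y) (x : cob A X) => chom B y (F X x).

Inductive single (X : qob Q) : qob Q -> Type := pt : single X X.

Definition star (X : qob Q) : QCat :=
  {| cob := single X;
     chom := fun Y Y' (b : single X Y') (a : single X Y) =>
       match a in single _ Y0 return qhom Q Y0 Y' with
       | pt _ => match b in single _ Y1 return qhom Q X Y1 with
                 | pt _ => qid X end end |}.

(* a presheaf phi : *_X -> A, given by its elements phi(a) : X -> t a *)
Definition psh (X : qob Q) (A : QCat) : Type := forall Z, cob A Z -> qhom Q X Z.

Definition psh_dist X A (phi : psh X A) : dist (star X) A :=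
  fun Y Z (z : cob A Z) (s : single X Y) =>
    match s in single _ Y0 return qhom Q Y0 Z with pt _ => phi Z z end.

Definition dist_psh X A (P : dist (star X) A) : psh X A :=
  fun Z z => P X Z z (@pt X).

Definition is_ladj_psh X A (phi : psh X A) : Prop :=
  exists P' : dist A (star X), is_ladj (psh_dist phi) P'.

Definition is_sladj_psh X A (phi : psh X A) : Prop :=
  is_ladj (psh_dist phi) (dconv (psh_dist phi)).

(* the (chosen) right adjoint; unique when it exists *)
Definition radj X A (phi : psh X A) : dist A (star X) :=
  epsilon (inhabits (fun _ _ _ _ => qbot)) (fun P' => is_ladj (psh_dist phi) P').

(* hom of the Cauchy completion: the unique element of psi^* (x) phi *)
Definition cc_hom A X Y (psi : psh Y A) (phi : psh X A) : qhom Q X Y :=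
  dcomp (radj psi) (psh_dist phi) (@pt Y) (@pt X).

Definition cc (A : QCat) : QCat :=
  {| cob := fun X => {phi : psh X A | is_ladj_psh phi};
     chom := fun X Y psi phi => cc_hom (proj1_sig psi) (proj1_sig phi) |}.

Definition sym (A : QCat) : QCat :=
  {| cob := cob A;
     chom := fun X Y (y : cob A Y) (x : cob A X) =>
       qmeet (chom A y x) (qinv (chom A x y)) |}.

Definition sc (A : QCat) : QCat :=
  {| cob := fun X => {phi : cob (cc A) X | is_sladj_psh (proj1_sig phi)};
     chom := fun X Y psi phi => chom (cc A) (proj1_sig psi) (proj1_sig phi) |}.

Definition Sfun (A : QCat) : forall X, cob (sym A) X -> cob A X := fun X x => x.
Arguments Sfun : clear implicits.

Definition Ffun_s (A B : QCat) (F : forall X, cob A X -> cob B X) :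
  forall X, cob (sym A) X -> cob (sym B) X := F.

Definition L_psh (A : QCat) X (phi : psh X (sym A)) : psh X A :=
  dist_psh (dcomp (fdist (Sfun A)) (psh_dist phi)).

Definition Fcc_psh (A B : QCat) (F : forall X, cob A X -> cob B X) X
  (phi : psh X A) : psh X B :=
  dist_psh (dcomp (fdist F) (psh_dist phi)).

Definition Fsc_psh (A B : QCat) (F : forall X, cob A X -> cob B X) X
  (phi : psh X (sym A)) : psh X (sym B) :=
  dist_psh (dcomp (fdist (Ffun_s F)) (psh_dist phi)).

Definition sym_complete (A : QCat) : Prop :=
  forall X (phi : psh X A), is_sladj_psh phi ->
    exists a : cob A X, forall Z (z : cob A Z), phi Z z = chom A z a.

End QCategories.

Arguments chom {Q} _ {X Y}.

Arguments dist_psh {Q X A} P Z z.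
Arguments L_psh {Q A X} phi Z z.
Arguments Fcc_psh {Q A B} F {X} phi Z z.
Arguments Fsc_psh {Q A B} F {X} phi Z z.
Arguments Sfun {Q} A X x.

From Stdlib Require Import ClassicalEpsilon FunctionalExtensionality ProofIrrelevance.
Set Implicit Arguments.
Unset Strict Implicit.

(* [L_A phi = A(-,S_A-) (x) phi] has the right adjoint [phi^o (x) A(S_A-,-)]. Computing
   homs of [A_cc] through these right adjoints, the symmetrised hom between [L_A psi] and
   [L_A phi] collapses to [psi^o (x) phi], the hom of [(A_s)_sc]; and a symmetric left
   adjoint is determined by the units [1 <= phi^o (x) phi'] and [1 <= phi'^o (x) phi],
   so [L_A] is injective.
   A symmetric left adjoint [Phi] on [(A_cc)_s] is represented by the weighted colimit
   [\/_zeta zeta (x) Phi(zeta)] of the objects of [A_cc], whose right adjoint is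
   [\/_zeta Phi(zeta)^o (x) zeta^*]. *)

#[local] Arguments qle_refl {q X Y} f.
#[local] Arguments qle_trans {q X Y f g h}.
#[local] Arguments qle_antisym {q X Y f g}.
#[local] Arguments qsup_ub {q X Y S f}.
#[local] Arguments qsup_least {q X Y S g}.
#[local] Arguments qcompA {q X Y Z W} f g h.
#[local] Arguments qcomp1l {q X Y} f.
#[local] Arguments qcomp1r {q X Y} f.
#[local] Arguments qinv_mono {i X Y f g}.
#[local] Arguments qinv_comp {i X Y Z} f g.
#[local] Arguments qinv_inv {i X Y} f.

Section QuantaloidOrder.
Variable Q : Quantaloid.

Lemma qsup_pair X Y (f g : qhom Q X Y) : qle f g -> qsup (fun h => h = f \/ h = g) = g.
Proof.
  intro le_fg; apply qle_antisym.
  - apply qsup_least; intros h [-> | ->]; [exact le_fg | apply qle_refl].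
  - apply qsup_ub; right; reflexivity.
Qed.

(* Composition preserves the binary join [f \/ f' = f']. *)
Lemma qcomp_monor X Y Z (g : qhom Q Y Z) (f f' : qhom Q X Y) :
  qle f f' -> qle (qcomp g f) (qcomp g f').
Proof.
  intro le_f; rewrite <- (qsup_pair le_f), qcomp_supl.
  apply qsup_ub; exists f; auto.
Qed.

Lemma qcomp_monol X Y Z (g g' : qhom Q Y Z) (f : qhom Q X Y) :
  qle g g' -> qle (qcomp g f) (qcomp g' f).
Proof.
  intro le_g; rewrite <- (qsup_pair le_g), qcomp_supr.
  apply qsup_ub; exists g; auto.
Qed.

Lemma qcomp_mono X Y Z (g g' : qhom Q Y Z) (f f' : qhom Q X Y) :
  qle g g' -> qle f f' -> qle (qcomp g f) (qcomp g' f').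
Proof.
  intros le_g le_f.
  exact (qle_trans (qcomp_monol f le_g) (qcomp_monor g' le_f)).
Qed.

Lemma le_qcompl X Y (g : qhom Q Y Y) (f : qhom Q X Y) : qle (qid Y) g -> qle f (qcomp g f).
Proof. intro le_g; rewrite <- (qcomp1l f) at 1; exact (qcomp_monol f le_g). Qed.

Lemma le_qcompr X Y (g : qhom Q X X) (f : qhom Q X Y) : qle (qid X) g -> qle f (qcomp f g).
Proof. intro le_g; rewrite <- (qcomp1r f) at 1; exact (qcomp_monor f le_g). Qed.

Lemma le_qsup X Y (S : qhom Q X Y -> Prop) f g : S f -> qle g f -> qle g (qsup S).
Proof. intros Sf le_gf; exact (qle_trans le_gf (qsup_ub Sf)). Qed.

Lemma qcomp_supl_le X Y Z (g : qhom Q Y Z) (S : qhom Q X Y -> Prop) h :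
  (forall f, S f -> qle (qcomp g f) h) -> qle (qcomp g (qsup S)) h.
Proof.
  intro le_h; rewrite qcomp_supl; apply qsup_least.
  intros k [f [Sf ->]]; exact (le_h f Sf).
Qed.

Lemma qcomp_supr_le X Y Z (S : qhom Q Y Z -> Prop) (f : qhom Q X Y) h :
  (forall g, S g -> qle (qcomp g f) h) -> qle (qcomp (qsup S) f) h.
Proof.
  intro le_h; rewrite qcomp_supr; apply qsup_least.
  intros k [g [Sg ->]]; exact (le_h g Sg).
Qed.

Lemma qcomp3_le_sup X Y Z W (h : qhom Q Z W) (S : qhom Q Y Z -> Prop)
    (x : qhom Q Y Z) (k : qhom Q X Y) g :
  qle x (qsup S) -> (forall s, S s -> qle (qcomp h (qcomp s k)) g) ->
  qle (qcomp h (qcomp x k)) g.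
Proof.
  intros le_x le_g.
  apply (qle_trans (qcomp_monor h (qcomp_monol k le_x))).
  rewrite qcomp_supr, qcomp_supl; apply qsup_least.
  intros f [t [[s [Ss ->]] ->]]; exact (le_g s Ss).
Qed.

End QuantaloidOrder.

Section InvolutiveQuantaloid.
Variable Q : IQuantaloid.

Lemma qinv_le_swap X Y (f : qhom Q X Y) g : qle f (qinv g) -> qle (qinv f) g.
Proof. intro le_f; rewrite <- (qinv_inv g); exact (qinv_mono le_f). Qed.

Lemma le_qinv_swap X Y (f : qhom Q Y X) g : qle (qinv f) g -> qle f (qinv g).
Proof. intro le_f; rewrite <- (qinv_inv f); exact (qinv_mono le_f). Qed.

Lemma qinv_sup_le X Y (S : qhom Q X Y -> Prop) g :
  (forall s, S s -> qle (qinv s) g) -> qle (qinv (qsup S)) g.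
Proof. intro le_g; apply qinv_le_swap; apply qsup_least; intros s Ss; apply le_qinv_swap; auto. Qed.

Lemma qinv_id X : qinv (qid X) = qid (q := Q) X.
Proof.
  pose proof (qinv_comp (qinv (qid X)) (qid X)) as E.
  rewrite qcomp1l, !qinv_inv, qcomp1l in E; symmetry; exact E.
Qed.

Lemma qmeet_lel X Y (f g : qhom Q X Y) : qle (qmeet f g) f.
Proof. apply qsup_least; intros h [le_f _]; exact le_f. Qed.

Lemma qmeet_ler X Y (f g : qhom Q X Y) : qle (qmeet f g) g.
Proof. apply qsup_least; intros h [_ le_g]; exact le_g. Qed.

Lemma qle_meet X Y (f g h : qhom Q X Y) : qle h f -> qle h g -> qle h (qmeet f g).
Proof. intros; apply qsup_ub; auto. Qed.

End InvolutiveQuantaloid.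

Section AdjointPresheaves.
Variable Q : IQuantaloid.

Definition is_psh (A : QCat Q) X (phi : psh X A) : Prop :=
  forall Y Y' (y' : cob A Y') (y : cob A Y), qle (qcomp (chom A y' y) (phi Y y)) (phi Y' y').

(* A distributor [A -> *_X], given by its elements. *)
Definition copsh (A : QCat Q) X : Type := forall Z, cob A Z -> qhom Q Z X.

Definition is_copsh (A : QCat Q) X (R : copsh A X) : Prop :=
  forall Z Z' (z : cob A Z) (z' : cob A Z'), qle (qcomp (R Z z) (chom A z z')) (R Z' z').

(* The unique element of the composite distributor [R (x) phi : *_X -> *_Y]. *)
Definition tensor (A : QCat Q) X Y (R : copsh A Y) (phi : psh X A) : qhom Q X Y :=
  qsup (fun h => exists Z (z : cob A Z), h = qcomp (R Z z) (phi Z z)).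

Record adjoint_pair (A : QCat Q) X (phi : psh X A) (R : copsh A X) : Prop := {
  adj_psh : is_psh phi;
  adj_copsh : is_copsh R;
  adj_unit : qle (qid X) (tensor R phi);
  adj_counit : forall Y Z (y : cob A Y) (z : cob A Z), qle (qcomp (phi Y y) (R Z z)) (chom A y z)
}.

Definition psh_conv (A : QCat Q) X (phi : psh X A) : copsh A X := fun Z z => qinv (phi Z z).

Definition copsh_dist (A : QCat Q) X (R : copsh A X) : dist A (star X) :=
  fun X0 Y s x => match s in single _ Y0 return qhom Q X0 Y0 with pt _ => R X0 x end.

Definition radj_at (A : QCat Q) X (phi : psh X A) : copsh A X :=
  fun Z z => radj phi (pt X) z.
Arguments psh_conv {A X} phi Z z.
Arguments radj_at {A X} phi Z z.

Variable A : QCat Q.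

Lemma le_tensor X Y (R : copsh A Y) (phi : psh X A) Z (z : cob A Z) g :
  qle g (qcomp (R Z z) (phi Z z)) -> qle g (tensor R phi).
Proof. apply le_qsup; exists Z, z; reflexivity. Qed.

Lemma tensor_le X Y (R : copsh A Y) (phi : psh X A) g :
  (forall Z (z : cob A Z), qle (qcomp (R Z z) (phi Z z)) g) -> qle (tensor R phi) g.
Proof. intro le_g; apply qsup_least; intros h [Z [z ->]]; apply le_g. Qed.

Lemma tensor_ext X Y (R R' : copsh A Y) (phi : psh X A) :
  (forall Z (z : cob A Z), R Z z = R' Z z) -> tensor R phi = tensor R' phi.
Proof.
  intro E; apply qle_antisym; apply tensor_le; intros Z z;
    apply (le_tensor (z := z)); rewrite E; apply qle_refl.
Qed.

Lemma adjoint_pair_ladj X (phi : psh X A) (R : copsh A X) :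
  adjoint_pair phi R -> is_ladj (psh_dist phi) (copsh_dist R).
Proof.
  intros [act_phi act_R unit counit]; split; [|split; [|split]].
  - split.
    + intros X0 Y Y' y' y [] ; apply act_phi.
    + intros X0 X' Y y [] x'; destruct x'; simpl; rewrite qcomp1r; apply qle_refl.
  - split.
    + intros X0 Y Y' [] y x; destruct y; simpl; rewrite qcomp1l; apply qle_refl.
    + intros X0 X' Y [] x x'; apply act_R.
  - intros X0 Y0 [] x; destruct x; simpl.
    apply (qle_trans unit); apply tensor_le; intros Z z.
    apply qsup_ub; exists Z, z; reflexivity.
  - intros X0 Y0 y x; apply qsup_least; intros h [Y [[] ->]]; apply counit.
Qed.

Lemma ladj_adjoint_pair X (phi : psh X A) (P : dist A (star X)) :
  is_ladj (psh_dist phi) P -> adjoint_pair phi (fun Z z => P Z X (pt X) z).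
Proof.
  intros [[act_phi _] [[_ act_P] [unit counit]]]; split.
  - intros Y Y' y' y; exact (act_phi X Y Y' y' y (pt X)).
  - intros Z Z' z z'; apply act_P.
  - apply (qle_trans (unit X X (pt X) (pt X))); apply qsup_least.
    intros h [Y [y ->]]; apply (le_tensor (z := y)); apply qle_refl.
  - intros Y Z y z; refine (qle_trans _ (counit Z Y y z)).
    apply qsup_ub; exists X, (pt X); reflexivity.
Qed.

Lemma sladj_adjoint_pair X (phi : psh X A) :
  is_sladj_psh phi -> adjoint_pair phi (psh_conv phi).
Proof. exact (@ladj_adjoint_pair X phi _). Qed.

Lemma radj_adjoint_pair X (phi : psh X A) :
  is_ladj_psh phi -> adjoint_pair phi (radj_at phi).
Proof.
  intros [P ladj_P]; apply ladj_adjoint_pair; unfold radj.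
  apply epsilon_spec; exists P; exact ladj_P.
Qed.

Lemma adjoint_pair_le X (phi : psh X A) (R1 R2 : copsh A X) :
  adjoint_pair phi R1 -> adjoint_pair phi R2 -> forall Z (z : cob A Z), qle (R1 Z z) (R2 Z z).
Proof.
  intros adj1 adj2 Z z; rewrite <- (qcomp1l (R1 Z z)).
  apply (qle_trans (qcomp_monol _ (adj_unit adj2))); apply qcomp_supr_le.
  intros g [Y [y ->]]; rewrite <- qcompA.
  exact (qle_trans (qcomp_monor _ (adj_counit adj1 y z)) (adj_copsh adj2 y z)).
Qed.

Lemma radj_atE X (phi : psh X A) (R : copsh A X) :
  adjoint_pair phi R -> forall Z (z : cob A Z), radj_at phi Z z = R Z z.
Proof.
  intros adj Z z.
  pose proof (radj_adjoint_pair (ex_intro _ _ (adjoint_pair_ladj adj))) as adj_radj.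
  apply qle_antisym;
    [exact (adjoint_pair_le adj_radj adj z) | exact (adjoint_pair_le adj adj_radj z)].
Qed.

Lemma cc_hom_radj X Y (psi : psh Y A) (phi : psh X A) :
  cc_hom psi phi = tensor (radj_at psi) phi.
Proof. reflexivity. Qed.

Lemma cc_homE X Y (psi : psh Y A) (R : copsh A Y) (phi : psh X A) :
  adjoint_pair psi R -> cc_hom psi phi = tensor R phi.
Proof. intro adj; exact (tensor_ext phi (radj_atE adj)). Qed.

Lemma cc_hom_sladj X Y (psi : psh Y A) (phi : psh X A) :
  is_sladj_psh psi -> cc_hom psi phi = tensor (psh_conv psi) phi.
Proof. intro sladj; exact (cc_homE phi (sladj_adjoint_pair sladj)). Qed.

Lemma qid_le_cc_hom X (phi : psh X A) : is_ladj_psh phi -> qle (qid X) (cc_hom phi phi).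
Proof. intro ladj; exact (adj_unit (radj_adjoint_pair ladj)). Qed.

Lemma cc_hom_comp X1 X2 X3 (phi1 : psh X1 A) (phi2 : psh X2 A) (phi3 : psh X3 A) :
  is_ladj_psh phi1 -> is_ladj_psh phi2 ->
  qle (qcomp (cc_hom phi1 phi2) (cc_hom phi2 phi3)) (cc_hom phi1 phi3).
Proof.
  intros ladj1 ladj2; pose proof (radj_adjoint_pair ladj1) as adj1.
  pose proof (radj_adjoint_pair ladj2) as adj2; rewrite !cc_hom_radj.
  apply qcomp_supr_le; intros g [W [w ->]]; apply qcomp_supl_le; intros f [W' [w' ->]].
  apply (le_tensor (z := w')); rewrite qcompA.
  apply qcomp_monol; rewrite <- qcompA.
  exact (qle_trans (qcomp_monor _ (adj_counit adj2 w w')) (adj_copsh adj1 w w')).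
Qed.

Lemma psh_cc_hom_radj_le X Y (xi : psh X A) (zeta : psh Y A) :
  is_qcat A -> is_ladj_psh xi -> is_ladj_psh zeta ->
  forall V W (v : cob A V) (w : cob A W),
    qle (qcomp (xi V v) (qcomp (cc_hom xi zeta) (radj_at zeta W w))) (chom A v w).
Proof.
  intros [compA _] ladj_xi ladj_zeta V W v w.
  apply (qcomp3_le_sup (qle_refl (cc_hom xi zeta))); intros s [D [d ->]].
  rewrite <- qcompA, qcompA; refine (qle_trans _ (compA _ _ _ v d w)).
  exact (qcomp_mono (adj_counit (radj_adjoint_pair ladj_xi) v d)
                    (adj_counit (radj_adjoint_pair ladj_zeta) d w)).
Qed.

Lemma sladj_le_of_unit X (phi phi' : psh X A) :
  is_sladj_psh phi -> is_sladj_psh phi' -> qle (qid X) (tensor (psh_conv phi) phi') ->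
  forall Z (z : cob A Z), qle (phi Z z) (phi' Z z).
Proof.
  intros sladj sladj' unit Z z; rewrite <- (qcomp1r (phi Z z)).
  apply (qle_trans (qcomp_monor _ unit)); apply qcomp_supl_le; intros g [C [c ->]].
  rewrite qcompA; refine (qle_trans (qcomp_monol _ _) (adj_psh (sladj_adjoint_pair sladj') z c)).
  exact (adj_counit (sladj_adjoint_pair sladj) z c).
Qed.

End AdjointPresheaves.

Arguments psh_conv {Q A X} phi Z z.
Arguments radj_at {Q A X} phi Z z.

Section Symmetrisation.
Variable Q : IQuantaloid.
Variable A : QCat Q.

Lemma sym_chom_le X Y (y : cob A Y) (x : cob A X) : qle (chom (sym A) y x) (chom A y x).
Proof. apply qmeet_lel. Qed.

Lemma qid_le_sym_chom X (x : cob A X) : is_qcat A -> qle (qid X) (chom (sym A) x x).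
Proof.
  intros [_ qid_le]; apply qle_meet; [apply qid_le |].
  rewrite <- qinv_id; apply qinv_mono; apply qid_le.
Qed.

Lemma sladj_sym_counit X (phi : psh X (sym A)) : is_sladj_psh phi ->
  forall Y Z (y : cob A Y) (z : cob A Z), qle (qcomp (phi Y y) (qinv (phi Z z))) (chom A y z).
Proof.
  intros sladj Y Z y z.
  exact (qle_trans (adj_counit (sladj_adjoint_pair sladj) y z) (sym_chom_le y z)).
Qed.

End Symmetrisation.

Lemma L_psh_natural (Q : IQuantaloid) (A B : QCat Q) (F : forall X, cob A X -> cob B X) :
  is_qcat A -> is_qcat B -> is_functor F ->
  forall X (phi : psh X (sym A)) Z (z : cob B Z),
    Fcc_psh F (L_psh phi) Z z = L_psh (Fsc_psh F phi) Z z.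
Proof.
  intros [compA qid_leA] catB funF X phi Z z; pose proof catB as [compB _].
  change (tensor (fun Y y => chom B z (F Y y)) (L_psh phi)
          = tensor (A := sym B) (fun W w => chom B z w)
              (fun W w => tensor (A := sym A) (fun Y y => chom (sym B) w (F Y y)) phi)).
  apply qle_antisym; apply tensor_le.
  - intros Y y; apply qcomp_supl_le; intros g [Y' [a ->]].
    apply (le_tensor (z := F Y' a)); rewrite qcompA; apply qcomp_mono.
    + exact (qle_trans (qcomp_monor _ (funF _ _ y a)) (compB _ _ _ z (F Y y) (F Y' a))).
    + apply (le_tensor (z := a)); apply le_qcompl; exact (qid_le_sym_chom _ catB).
  - intros W w; apply qcomp_supl_le; intros g [Y [a ->]].
    apply (le_tensor (z := a)); rewrite qcompA; apply qcomp_mono.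
    + exact (qle_trans (qcomp_monor _ (sym_chom_le _ _)) (compB _ _ _ z w (F Y a))).
    + apply (le_tensor (z := a)); apply le_qcompl; apply qid_leA.
Qed.

Section SymmetricEmbedding.
Variable Q : IQuantaloid.
Variable A : QCat Q.
Hypothesis catA : is_qcat A.

Definition L_radj X (phi : psh X (sym A)) : copsh A X :=
  fun Z z => tensor (A := sym A) (psh_conv phi) (fun Y (y : cob A Y) => chom A y z).
Arguments L_radj {X} phi Z z.

Lemma le_L_psh X (phi : psh X (sym A)) Z (z : cob A Z) : qle (phi Z z) (L_psh phi Z z).
Proof. apply (le_tensor (z := z)); apply le_qcompl; apply (proj2 catA). Qed.

Lemma qinv_le_L_radj X (phi : psh X (sym A)) Z (z : cob A Z) :
  qle (qinv (phi Z z)) (L_radj phi Z z).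
Proof. apply (le_tensor (z := z)); apply le_qcompr; apply (proj2 catA). Qed.

Lemma tensor_conv_le_L X Y (psi : psh Y (sym A)) (phi : psh X (sym A)) :
  qle (tensor (psh_conv psi) phi) (tensor (L_radj psi) (L_psh phi)).
Proof.
  apply tensor_le; intros Z z; apply (le_tensor (z := z)).
  exact (qcomp_mono (qinv_le_L_radj psi z) (le_L_psh phi z)).
Qed.

Lemma sladj_L_radj_le X (phi : psh X (sym A)) : is_sladj_psh phi ->
  forall C B (c : cob A C) (b : cob A B), qle (qcomp (phi C c) (L_radj phi B b)) (chom A c b).
Proof.
  intros sladj C B c b; apply qcomp_supl_le; intros g [Z [a ->]]; rewrite qcompA.
  exact (qle_trans (qcomp_monol _ (sladj_sym_counit sladj c a)) (proj1 catA _ _ _ c a b)).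
Qed.

Lemma L_psh_conv_le X (phi : psh X (sym A)) : is_sladj_psh phi ->
  forall B C (b : cob A B) (c : cob A C), qle (qcomp (L_psh phi B b) (qinv (phi C c))) (chom A b c).
Proof.
  intros sladj B C b c; apply qcomp_supr_le; intros g [Z [a ->]]; rewrite <- qcompA.
  exact (qle_trans (qcomp_monor _ (sladj_sym_counit sladj a c)) (proj1 catA _ _ _ b a c)).
Qed.

Lemma L_adjoint_pair X (phi : psh X (sym A)) :
  is_sladj_psh phi -> adjoint_pair (L_psh phi) (L_radj phi).
Proof.
  intro sladj; pose proof catA as [compA _]; split.
  - intros Y Y' y' y; apply qcomp_supl_le; intros g [Z [a ->]].
    apply (le_tensor (z := a)); rewrite qcompA; apply qcomp_monol; apply compA.
  - intros Z Z' z z'; apply qcomp_supr_le; intros g [Y [a ->]].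
    apply (le_tensor (z := a)); rewrite <- qcompA; apply qcomp_monor; apply compA.
  - exact (qle_trans (adj_unit (sladj_adjoint_pair sladj)) (tensor_conv_le_L phi phi)).
  - intros Y Z y z; apply qcomp_supr_le; intros g [W [a ->]]; rewrite <- qcompA.
    exact (qle_trans (qcomp_monor _ (sladj_L_radj_le sladj a z)) (compA _ _ _ y a z)).
Qed.

Lemma cc_hom_L X Y (psi : psh Y (sym A)) (phi : psh X (sym A)) : is_sladj_psh psi ->
  cc_hom (L_psh psi) (L_psh phi) = tensor (L_radj psi) (L_psh phi).
Proof. intro sladj; exact (cc_homE _ (L_adjoint_pair sladj)). Qed.

Lemma le_cc_hom_L X Y (psi : psh Y (sym A)) (phi : psh X (sym A)) (x : qhom Q X Y) :
  is_sladj_psh psi -> is_sladj_psh phi -> qle x (cc_hom (L_psh psi) (L_psh phi)) ->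
  forall C C' (c : cob A C) (c' : cob A C'),
    qle (qcomp (psi C c) (qcomp x (qinv (phi C' c')))) (chom A c c').
Proof.
  intros sladj_psi sladj_phi le_x C C' c c'; rewrite (cc_hom_L _ sladj_psi) in le_x.
  apply (qcomp3_le_sup le_x); intros s [B [b ->]]; rewrite <- qcompA, qcompA.
  refine (qle_trans _ (proj1 catA _ _ _ c b c')).
  exact (qcomp_mono (sladj_L_radj_le sladj_psi c b) (L_psh_conv_le sladj_phi b c')).
Qed.

Lemma sym_cc_hom_L X Y (psi : psh Y (sym A)) (phi : psh X (sym A)) :
  is_sladj_psh psi -> is_sladj_psh phi ->
  qmeet (cc_hom (L_psh psi) (L_psh phi)) (qinv (cc_hom (L_psh phi) (L_psh psi)))
  = tensor (psh_conv psi) phi.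
Proof.
  intros sladj_psi sladj_phi; pose proof (sladj_adjoint_pair sladj_psi) as adj_psi.
  pose proof (sladj_adjoint_pair sladj_phi) as adj_phi.
  apply qle_antisym.
  - set (x := qmeet _ _).
    assert (x_sym : forall C C' (c : cob A C) (c' : cob A C'),
      qle (qcomp (psi C c) (qcomp x (qinv (phi C' c')))) (chom (sym A) c c')).
    { intros C C' c c'; apply qle_meet.
      - apply le_cc_hom_L; [exact sladj_psi | exact sladj_phi | apply qmeet_lel].
      - apply le_qinv_swap; rewrite !qinv_comp, !qinv_inv, <- qcompA.
        apply le_cc_hom_L; [exact sladj_phi | exact sladj_psi |].
        apply qinv_le_swap; apply qmeet_ler. }
    (* squeeze [x] between the units [1 <= psi^o (x) psi] and [1 <= phi^o (x) phi] *)
    apply (qle_trans (le_qcompl x (adj_unit adj_psi))).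
    apply qcomp_supr_le; intros g [C [c ->]].
    apply (qle_trans (qcomp_monor _ (le_qcompr x (adj_unit adj_phi)))).
    rewrite qcompA; apply qcomp_supl_le; intros g [C' [c' ->]].
    apply (le_tensor (z := c)); rewrite <- !qcompA; apply qcomp_monor.
    rewrite (qcompA (phi C' c') _ x), qcompA.
    exact (qle_trans (qcomp_monol _ (x_sym C C' c c')) (adj_psh adj_phi c c')).
  - apply qle_meet; [rewrite (cc_hom_L _ sladj_psi); exact (tensor_conv_le_L psi phi) |].
    apply le_qinv_swap; apply qinv_sup_le; intros s [Z [z ->]].
    unfold psh_conv; rewrite (cc_hom_L _ sladj_phi), qinv_comp, qinv_inv.
    apply (le_tensor (z := z)).
    exact (qcomp_mono (qinv_le_L_radj phi z) (le_L_psh psi z)).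
Qed.

Definition L_obj X (phi : cob (sc (sym A)) X) : cob (sym (cc A)) X :=
  exist (fun p => is_ladj_psh p) (L_psh (proj1_sig (proj1_sig phi)))
    (ex_intro _ _ (adjoint_pair_ladj (L_adjoint_pair (proj2_sig phi)))).

Lemma L_obj_fully_faithful : fully_faithful L_obj.
Proof.
  intros X Y [[psi ladj_psi] sladj_psi] [[phi ladj_phi] sladj_phi].
  change (qmeet (cc_hom (L_psh psi) (L_psh phi)) (qinv (cc_hom (L_psh phi) (L_psh psi)))
          = cc_hom psi phi).
  rewrite sym_cc_hom_L by assumption; symmetry; exact (cc_hom_sladj phi sladj_psi).
Qed.

Lemma L_obj_injective : injective_on_objects L_obj.
Proof.
  intros X x x' E.
  assert (unit_of : forall y y' : cob (sc (sym A)) X,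
            L_obj y = L_obj y' -> qle (qid X) (chom (sc (sym A)) y y')).
  { intros y y' Ey; rewrite <- L_obj_fully_faithful, <- Ey, L_obj_fully_faithful.
    exact (qid_le_cc_hom (proj2_sig (proj1_sig y))). }
  pose proof (unit_of _ _ E) as unit; pose proof (unit_of _ _ (eq_sym E)) as unit'.
  change (qle (qid X) (cc_hom (proj1_sig (proj1_sig x)) (proj1_sig (proj1_sig x')))) in unit.
  change (qle (qid X) (cc_hom (proj1_sig (proj1_sig x')) (proj1_sig (proj1_sig x)))) in unit'.
  rewrite (cc_hom_sladj _ (proj2_sig x)) in unit.
  rewrite (cc_hom_sladj _ (proj2_sig x')) in unit'.
  do 2 (apply eq_sig_hprop; [intros; apply proof_irrelevance |]).
  apply functional_extensionality_dep; intro Z; apply functional_extensionality; intro z.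
  apply qle_antisym;
    [exact (sladj_le_of_unit (proj2_sig x) (proj2_sig x') unit z)
    | exact (sladj_le_of_unit (proj2_sig x') (proj2_sig x) unit' z)].
Qed.

End SymmetricEmbedding.

Arguments L_radj {Q A X} phi Z z.

Section SymmetricCompleteness.
Variable Q : IQuantaloid.
Variable A : QCat Q.
Hypothesis catA : is_qcat A.
Variable X : qob Q.
Variable Phi : psh X (sym (cc A)).
Arguments Phi : clear implicits.
Hypothesis sladj_Phi : is_sladj_psh Phi.

(* The [Phi]-weighted colimit of the objects of [A_cc]; [Phi] is represented by it. *)
Definition colim : psh X A :=
  fun W b => tensor (A := sym (cc A)) (fun Z (zeta : cob (cc A) Z) => proj1_sig zeta W b) Phi.

Definition colim_radj : copsh A X :=
  fun W b => tensor (A := sym (cc A)) (psh_conv Phi)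
                    (fun Z (zeta : cob (cc A) Z) => radj_at (proj1_sig zeta) W b).

Arguments colim : clear implicits.
Arguments colim_radj : clear implicits.

Lemma colim_adjoint_pair : adjoint_pair colim colim_radj.
Proof.
  pose proof (sladj_adjoint_pair sladj_Phi) as adj_Phi; split.
  - intros Y Y' y' y; apply qcomp_supl_le; intros g [Z [zeta ->]].
    apply (le_tensor (z := zeta)); rewrite qcompA; apply qcomp_monol.
    exact (adj_psh (radj_adjoint_pair (proj2_sig zeta)) y' y).
  - intros W W' w w'; apply qcomp_supr_le; intros g [Z [zeta ->]].
    apply (le_tensor (z := zeta)); rewrite <- qcompA; apply qcomp_monor.
    exact (adj_copsh (radj_adjoint_pair (proj2_sig zeta)) w w').
  - apply (qle_trans (adj_unit adj_Phi)); apply tensor_le; intros Z zeta.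
    rewrite <- (qcomp1l (Phi Z zeta)).
    apply (qcomp3_le_sup (adj_unit (radj_adjoint_pair (proj2_sig zeta)))).
    intros s [W [b ->]]; apply (le_tensor (z := b)); rewrite <- qcompA, qcompA.
    apply qcomp_mono; [apply (le_tensor (z := zeta)) | apply (le_tensor (z := zeta))];
      apply qle_refl.
  - intros Y W y w; apply qcomp_supr_le; intros g [Z1 [xi ->]].
    apply qcomp_supl_le; intros g [Z2 [zeta ->]].
    rewrite <- qcompA, (qcompA _ _ (Phi Z1 xi)).
    refine (qle_trans (qcomp_monor _ (qcomp_monol _ (sladj_sym_counit sladj_Phi xi zeta))) _).
    exact (psh_cc_hom_radj_le catA (proj2_sig xi) (proj2_sig zeta) y w).
Qed.

Definition colim_obj : cob (cc A) X :=
  exist (fun p => is_ladj_psh p) colim (ex_intro _ _ (adjoint_pair_ladj colim_adjoint_pair)).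

Lemma Phi_le_cc_hom_colim Z (zeta : cob (cc A) Z) :
  qle (Phi Z zeta) (cc_hom (proj1_sig zeta) colim).
Proof.
  apply (qle_trans (le_qcompl _ (adj_unit (radj_adjoint_pair (proj2_sig zeta))))).
  apply qcomp_supr_le; intros g [W [b ->]]; apply (le_tensor (z := b)).
  rewrite <- qcompA; apply qcomp_monor; apply (le_tensor (z := zeta)); apply qle_refl.
Qed.

Lemma qinv_Phi_le_cc_hom_colim Z (zeta : cob (cc A) Z) :
  qle (qinv (Phi Z zeta)) (cc_hom colim (proj1_sig zeta)).
Proof.
  rewrite (cc_homE _ colim_adjoint_pair).
  apply (qle_trans (le_qcompr _ (adj_unit (radj_adjoint_pair (proj2_sig zeta))))).
  apply qcomp_supl_le; intros g [W [b ->]]; apply (le_tensor (z := b)).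
  rewrite qcompA; apply qcomp_monol; apply (le_tensor (z := zeta)); apply qle_refl.
Qed.

Lemma cc_hom_colim_conv_le Z Y (zeta : cob (cc A) Z) (eta : cob (cc A) Y) :
  qle (qcomp (cc_hom (proj1_sig zeta) colim) (qinv (Phi Y eta)))
      (cc_hom (proj1_sig zeta) (proj1_sig eta)).
Proof.
  apply qcomp_supr_le; intros g [W [b ->]]; rewrite <- qcompA.
  apply (qcomp3_le_sup (qle_refl (colim W b))); intros s [Z1 [xi ->]].
  rewrite <- qcompA, qcompA.
  refine (qle_trans _ (cc_hom_comp _ (proj2_sig zeta) (proj2_sig xi))).
  apply qcomp_mono; [apply (le_tensor (z := b)); apply qle_refl |].
  exact (sladj_sym_counit sladj_Phi xi eta).
Qed.

Lemma Phi_cc_hom_colim_le Z Y (zeta : cob (cc A) Z) (eta : cob (cc A) Y) :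
  qle (qcomp (Phi Y eta) (cc_hom colim (proj1_sig zeta)))
      (cc_hom (proj1_sig eta) (proj1_sig zeta)).
Proof.
  rewrite (cc_homE _ colim_adjoint_pair); apply qcomp_supl_le; intros g [W [b ->]].
  apply (qcomp3_le_sup (qle_refl (colim_radj W b))); intros s [Z1 [xi ->]].
  rewrite <- qcompA, qcompA.
  refine (qle_trans _ (cc_hom_comp _ (proj2_sig eta) (proj2_sig xi))).
  apply qcomp_mono; [exact (sladj_sym_counit sladj_Phi eta xi) |].
  apply (le_tensor (z := b)); apply qle_refl.
Qed.

Lemma Phi_representable Z (zeta : cob (cc A) Z) :
  Phi Z zeta = chom (sym (cc A)) zeta colim_obj.
Proof.
  change (Phi Z zeta
          = qmeet (cc_hom (proj1_sig zeta) colim) (qinv (cc_hom colim (proj1_sig zeta)))).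
  apply qle_antisym.
  - apply qle_meet; [apply Phi_le_cc_hom_colim |].
    apply le_qinv_swap; apply qinv_Phi_le_cc_hom_colim.
  - set (x := qmeet _ _); pose proof (sladj_adjoint_pair sladj_Phi) as adj_Phi.
    apply (qle_trans (le_qcompr x (adj_unit adj_Phi))).
    apply qcomp_supl_le; intros g [Y [eta ->]]; rewrite qcompA.
    refine (qle_trans (qcomp_monol _ _) (adj_psh adj_Phi zeta eta)); apply qle_meet.
    + exact (qle_trans (qcomp_monol _ (qmeet_lel _ _)) (cc_hom_colim_conv_le zeta eta)).
    + apply le_qinv_swap; unfold psh_conv; rewrite qinv_comp, qinv_inv.
      exact (qle_trans (qcomp_monor _ (qinv_le_swap (qmeet_ler _ _)))
                       (Phi_cc_hom_colim_le zeta eta)).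
Qed.

End SymmetricCompleteness.

Lemma sym_cc_sym_complete (Q : IQuantaloid) (A : QCat Q) :
  is_qcat A -> sym_complete (sym (cc A)).
Proof.
  intros catA X Phi sladj_Phi; exists (colim_obj catA sladj_Phi).
  exact (Phi_representable catA sladj_Phi).
Qed.

Lemma fully_faithful_functor (Q : IQuantaloid) (A B : QCat Q) (F : forall X, cob A X -> cob B X) :
  fully_faithful F -> is_functor F.
Proof. intros ff X Y y x; rewrite ff; apply qle_refl. Qed.

Theorem proposition3p4 (Q : IQuantaloid) :
  (forall A : QCat Q, is_qcat A ->
     exists L : forall X, cob (sc (sym A)) X -> cob (sym (cc A)) X,
       (forall X (phi : cob (sc (sym A)) X) Z (z : cob A Z),
          proj1_sig (L X phi) Z z = L_psh (proj1_sig (proj1_sig phi)) Z z) /\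
       is_functor L /\ fully_faithful L /\ injective_on_objects L) /\
  (forall (A B : QCat Q) (F : forall X, cob A X -> cob B X),
     is_qcat A -> is_qcat B -> is_functor F ->
     forall X (phi : cob (sc (sym A)) X) Z (z : cob B Z),
       Fcc_psh F (L_psh (proj1_sig (proj1_sig phi))) Z z
       = L_psh (Fsc_psh F (proj1_sig (proj1_sig phi))) Z z) /\
  (forall A : QCat Q, is_qcat A -> sym_complete (sym (cc A))).
Proof.
  split; [|split].
  - intros A catA; exists (L_obj catA); pose proof (L_obj_fully_faithful catA) as ff.
    split; [reflexivity |].
    exact (conj (fully_faithful_functor ff) (conj ff (@L_obj_injective _ _ catA))).
  - intros A B F catA catB funF X phi; exact (L_psh_natural catA catB funF _).
  - exact (@sym_cc_sym_complete Q).
Qed.
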